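(* Let $V:[0,\infty)\to\mathbb{R}$ be càdlàg with finite variation on compact intervals. Then the set of complex levels for $V$ has zero Lebesgue measure.
   Context: $V(t-)$ denotes the left limit and $\Delta V(t)=V(t)-V(t-)$. A level $x\in\mathbb{R}$ is called simple for $V$ if two conditions hold. First, the set $\{t>0: V(t-)<x<V(t)\text{ or }V(t)<x<V(t-)\text{ or }V(t)=x\}$ is discrete, i.e. has no accumulation point in $[0,\infty)$. Second, there is no $t>0$ with $\Delta V(t)\neq0$ and $x\in\{V(t),V(t-)\}$. A level that is not simple is called complex. *)

From Stdlib Require Import Reals List.
Open Scope R_scope.

(* V : R -> R models a path on [0,oo); values at negative times are ignored. *)

Definition is_left_lim (V : R -> R) (t l : R) : Prop :=
  forall eps, 0 < eps -> exists delta, 0 < delta /\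
    forall s, 0 <= s -> t - delta < s < t -> Rabs (V s - l) < eps.

Definition cadlag (V : R -> R) : Prop :=
  (forall t, 0 <= t -> forall eps, 0 < eps -> exists delta, 0 < delta /\
      forall s, t <= s < t + delta -> Rabs (V s - V t) < eps) /\
  (forall t, 0 < t -> exists l, is_left_lim V t l).

Fixpoint ascending (p : list R) : Prop :=
  match p with
  | a :: ((b :: _) as r) => a <= b /\ ascending r
  | _ => True
  end.

Fixpoint variation_along (V : R -> R) (p : list R) : R :=
  match p with
  | a :: ((b :: _) as r) => Rabs (V b - V a) + variation_along V r
  | _ => 0
  end.

Definition finite_variation_loc (V : R -> R) : Prop :=
  forall T, 0 <= T -> exists M, forall p : list R,
    ascending p -> Forall (fun t => 0 <= t <= T) p -> variation_along V p <= M.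

Definition hit_time (V : R -> R) (x t : R) : Prop :=
  0 < t /\ exists l, is_left_lim V t l /\
    ((l < x < V t) \/ (V t < x < l) \/ V t = x).

Definition simple_level (V : R -> R) (x : R) : Prop :=
  (* the set of hit times has no accumulation point in [0,oo) *)
  (forall a, 0 <= a -> exists delta, 0 < delta /\
     forall t, hit_time V x t -> ~ (0 < Rabs (t - a) < delta)) /\
  (~ exists t l, 0 < t /\ is_left_lim V t l /\ V t - l <> 0 /\ (x = V t \/ x = l)).

Definition complex_level (V : R -> R) (x : R) : Prop := ~ simple_level V x.

Definition lebesgue_null (S : R -> Prop) : Prop :=
  forall eps, 0 < eps -> exists a b : nat -> R,
    (forall n, a n <= b n) /\
    (forall x, S x -> exists n, a n <= x <= b n) /\
    (forall N, sum_f_R0 (fun n => b n - a n) N <= eps).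

From Stdlib Require Import Reals List Lra Lia.
Set Warnings "-notation-overridden,-parsing,-ambiguous-paths".
From mathcomp Require Import all_boot all_order all_algebra.
From mathcomp Require Import all_classical all_reals all_analysis.
From mathcomp Require Import measurable_realfun Rstruct Rstruct_topology zify.
Import Order.TTheory GRing.Theory Num.Theory.
Import numFieldNormedType.Exports.
Local Open Scope classical_set_scope.
Open Scope R_scope.

(* A complex level x is of one of two kinds.
   (a) x = V(t) or x = V(t-) at a jump time t.  For every m the jumps of size
       > 1/(m+1) are isolated, so the jump times form a countable set and so do
       the values V(t), V(t-) at them.
   (b) The hit times of x accumulate, hence (b') for some n there are
       arbitrarily many distinct hit times in (0, n+1].
   Kind (b') is handled by a Banach-indicatrix argument.  Cut [0, n+1] into the
   dyadic cells of mesh 2^-k and let N_k(x) count the cells whose closed range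
   [inf V, sup V] contains x.  Then N_k is nondecreasing in k, and
   ∫ N_k = Σ (oscillation of V on the cells) <= total variation C on [0, n+1].
   By Markov's inequality {N_k >= M} has measure <= C/M for every k, hence so
   does the increasing union over k; the set where sup_k N_k = oo is null.
   Distinct hit times separated by more than the mesh fall in distinct cells,
   each of which has x in its range, so levels of kind (b') lie in this set.
   Finally a Lebesgue-negligible set is covered by countably many intervals of
   arbitrarily small total length, which is the form of the statement. *)

Lemma arch_nat (r : R) : exists N : nat, r < INR N.
Proof. exists (Num.truncn r).+1. rewrite INRE. apply/RltP. exact: truncnS_gt. Qed.

Lemma small_mesh (g : R) : 0 < g -> exists k : nat, / 2 ^ k < g.
Proof.
  intros Hg. destruct (pow_lt_1_zero (/ 2) ltac:(rewrite Rabs_pos_eq; lra) g Hg) as [k Hk].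
  exists k. specialize (Hk k (le_n k)). rewrite pow_inv Rabs_pos_eq in Hk; [exact Hk|].
  apply Rlt_le, Rinv_0_lt_compat, pow_lt. lra.
Qed.

(* The Markov bound C/(M+1) can be made smaller than any e > 0. *)
Lemma small_div (C e : R) : 0 < e -> exists M : nat, C / INR (S M) <= e.
Proof.
  intros He. destruct (arch_nat (C / e)) as [N HN]. exists N.
  assert (Hp : 0 < INR (S N)) by (apply lt_0_INR; lia).
  apply Rmult_le_reg_r with (INR (S N)); [lra|].
  unfold Rdiv. rewrite Rmult_assoc Rinv_l; [|lra]. rewrite Rmult_1_r.
  rewrite S_INR in Hp |- *.
  apply (Rmult_lt_compat_r e) in HN; [|lra].
  unfold Rdiv in HN. rewrite Rmult_assoc Rinv_l in HN; [|lra]. nra.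
Qed.

Lemma grid_index (h t : R) (K : nat) : 0 < h -> 0 < t -> t <= INR K * h ->
  exists j, (j < K)%nat /\ INR j * h < t <= INR (S j) * h.
Proof.
  intros Hh Ht. induction K as [|K IH]; intros HK.
  - simpl in HK. lra.
  - destruct (Rle_dec t (INR K * h)) as [H|H].
    + destruct (IH H) as [j [Hj1 Hj2]]. exists j. split; [lia|auto].
    + exists K. split; [lia|]. split; lra.
Qed.

Lemma list_min_pos (f : R -> R) (s : list R) :
  Forall (fun t => 0 < f t) s -> exists g, 0 < g /\ Forall (fun t => g <= f t) s.
Proof.
  induction s as [|a s IH]; intros H.
  - exists 1. split; [lra|constructor].
  - inversion H; subst. destruct (IH H3) as [g [Hg Hf]].
    exists (Rmin g (f a)). split; [apply Rmin_pos; lra|].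
    constructor; [apply Rmin_r|]. eapply Forall_impl; [|exact Hf].
    intros t Ht; simpl in Ht. apply Rle_trans with g; [apply Rmin_l|lra].
Qed.

Lemma list_gap (s : list R) : NoDup s ->
  exists g, 0 < g /\ forall t t', In t s -> In t' s -> t <> t' -> g <= Rabs (t - t').
Proof.
  induction s as [|a s IH]; intros H.
  - exists 1. split; [lra|]. intros t t' [].
  - inversion H; subst. destruct (IH H3) as [g [Hg Hgap]].
    destruct (list_min_pos (fun t => Rabs (a - t)) s) as [g2 [Hg2 Hf]].
    { apply Forall_forall. intros t Ht. apply Rabs_pos_lt. intro. apply H2.
      replace a with t by lra. exact Ht. }
    rewrite Forall_forall in Hf.
    exists (Rmin g g2). split; [apply Rmin_pos; lra|].
    intros t t' [E1|E1] [E2|E2] Hne; subst.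
    + congruence.
    + apply Rle_trans with g2; [apply Rmin_r|]. apply (Hf t' E2).
    + apply Rle_trans with g2; [apply Rmin_r|]. rewrite Rabs_minus_sym. apply (Hf t E1).
    + apply Rle_trans with g; [apply Rmin_l|]. apply Hgap; auto.
Qed.

Lemma left_lim_unique V t l1 l2 :
  0 < t -> is_left_lim V t l1 -> is_left_lim V t l2 -> l1 = l2.
Proof.
  intros Ht H1 H2. destruct (Req_dec l1 l2) as [|Hne]; auto.
  set (e := Rabs (l1 - l2) / 2).
  assert (Hp : 0 < Rabs (l1 - l2)) by (apply Rabs_pos_lt; intro; apply Hne; lra).
  assert (He : 0 < e) by (unfold e; lra).
  destruct (H1 e He) as [d1 [Hd1 P1]]. destruct (H2 e He) as [d2 [Hd2 P2]].
  set (d := Rmin t (Rmin d1 d2)).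
  assert (Hd : 0 < d) by (repeat apply Rmin_pos; lra).
  assert (d <= t /\ d <= d1 /\ d <= d2) as [Dt [D1 D2]].
  { unfold d. repeat split; [apply Rmin_l| |];
      (eapply Rle_trans; [apply Rmin_r|]); [apply Rmin_l|apply Rmin_r]. }
  assert (A1 : Rabs (V (t - d / 2) - l1) < e) by (apply P1; lra).
  assert (A2 : Rabs (V (t - d / 2) - l2) < e) by (apply P2; lra).
  unfold e in *. revert A1 A2. unfold Rabs; repeat destruct Rcase_abs; lra.
Qed.

Lemma left_lim_approx V t l a eps : 0 <= a < t -> is_left_lim V t l -> 0 < eps ->
  exists s, a < s < t /\ Rabs (V s - l) < eps.
Proof.
  intros Ha Hl He. destruct (Hl eps He) as [d [Hd P]].
  set (r := Rmin (t - a) d).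
  assert (r <= t - a) by apply Rmin_l. assert (r <= d) by apply Rmin_r.
  assert (0 < r) by (apply Rmin_pos; lra).
  exists (t - r / 2). split; [lra|]. apply P; lra.
Qed.

Lemma left_lim_within V s l p c e : 0 <= p < s -> is_left_lim V s l ->
  (forall u, p < u < s -> Rabs (V u - c) < e) -> Rabs (l - c) <= e.
Proof.
  intros Hp Hl Hu. destruct (Rle_dec (Rabs (l - c)) e) as [|Hn]; auto. exfalso.
  destruct (left_lim_approx V s l p (Rabs (l - c) - e) Hp Hl) as [u [Hu1 Hu2]]; [lra|].
  specialize (Hu u Hu1). revert Hu Hu2 Hn. unfold Rabs; repeat destruct Rcase_abs; lra.
Qed.

Lemma hit_time_bracket V x t a b : hit_time V x t -> 0 <= a < t -> t <= b ->
  exists u v, a <= u <= b /\ a <= v <= b /\ V u <= x <= V v.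
Proof.
  intros [Ht [l [Hl Hc]]] Ha Hb.
  destruct Hc as [[H1 H2]|[[H1 H2]|H]].
  - destruct (left_lim_approx V t l a (x - l) Ha Hl) as [s [Hs Hs2]]; [lra|].
    exists s, t. revert Hs2; unfold Rabs; destruct Rcase_abs; intros; repeat split; lra.
  - destruct (left_lim_approx V t l a (l - x) Ha Hl) as [s [Hs Hs2]]; [lra|].
    exists t, s. revert Hs2; unfold Rabs; destruct Rcase_abs; intros; repeat split; lra.
  - exists t, t. repeat split; lra.
Qed.

Definition big_jump (V : R -> R) (m : nat) (t : R) : Prop :=
  0 < t /\ exists l, is_left_lim V t l /\ / INR (S m) < Rabs (V t - l).

Lemma jump_is_big V t l : 0 < t -> is_left_lim V t l -> V t - l <> 0 ->
  exists m, big_jump V m t.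
Proof.
  intros Ht Hl Hne. assert (Hp : 0 < Rabs (V t - l)) by (apply Rabs_pos_lt; auto).
  destruct (arch_nat (/ Rabs (V t - l))) as [N HN]. exists N. split; auto.
  exists l. split; auto.
  assert (HS : INR N < INR (S N)) by (apply lt_INR; lia).
  assert (H0 : 0 < / Rabs (V t - l)) by (apply Rinv_0_lt_compat; auto).
  rewrite <- (Rinv_inv (Rabs (V t - l))). apply Rinv_lt_contravar; [nra|lra].
Qed.

(* For a càdlàg path, the jumps larger than 1/(m+1) are isolated: right
   continuity at t excludes them just after t, the left limit just before t. *)
Lemma big_jump_isolated V (hV : cadlag V) m t : big_jump V m t ->
  exists d, 0 < d /\ forall s, big_jump V m s -> Rabs (s - t) < d -> s = t.
Proof.
  intros [Ht [l [Hl Hj]]].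
  assert (Hm : 0 < / INR (S m)) by (apply Rinv_0_lt_compat, lt_0_INR; lia).
  set (e := / INR (S m) / 4).
  assert (He : 0 < e) by (unfold e; lra).
  destruct (proj1 hV t (Rlt_le _ _ Ht) e He) as [d1 [Hd1 Right]].
  destruct (Hl e He) as [d2 [Hd2 Left]].
  exists (Rmin d1 d2). split; [apply Rmin_pos; lra|].
  assert (Rmin d1 d2 <= d1) by apply Rmin_l.
  assert (Rmin d1 d2 <= d2) by apply Rmin_r.
  intros s [Hs [ls [Hls Hjs]]] Hst.
  destruct (Rtotal_order s t) as [Hlt|[Heq|Hgt]]; auto; exfalso.
  - assert (Hst' : t - d2 < s) by (revert Hst; unfold Rabs; destruct Rcase_abs; lra).
    assert (C1 : Rabs (ls - l) <= e).
    { apply (left_lim_within V s ls (Rmax (t - d2) 0)); auto.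
      - split; [apply Rmax_r|]. apply Rmax_lub_lt; lra.
      - intros u [Hu1 Hu2]. apply Left.
        + apply Rle_trans with (Rmax (t - d2) 0); [apply Rmax_r|lra].
        + split; [|lra]. apply Rle_lt_trans with (Rmax (t - d2) 0); [apply Rmax_l|lra]. }
    assert (C2 : Rabs (V s - l) < e) by (apply Left; lra).
    revert C1 C2 Hjs. unfold e, Rabs; repeat destruct Rcase_abs; lra.
  - assert (Hst' : s < t + d1) by (revert Hst; unfold Rabs; destruct Rcase_abs; lra).
    assert (C1 : Rabs (ls - V t) <= e).
    { apply (left_lim_within V s ls t); auto; [lra|].
      intros u [Hu1 Hu2]. apply Right. lra. }
    assert (C2 : Rabs (V s - V t) < e) by (apply Right; lra).
    revert C1 C2 Hjs. unfold e, Rabs; repeat destruct Rcase_abs; lra.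
Qed.

(** * Reduction to jump values and levels with many hit times *)

Definition many_hits (V : R -> R) (T x : R) : Prop := forall M : nat, exists s : list R,
  length s = M /\ NoDup s /\ Forall (fun t => hit_time V x t /\ t <= T) s.

Lemma accumulating_hit_lists V x a :
  (forall delta, 0 < delta -> exists t, hit_time V x t /\ 0 < Rabs (t - a) < delta) ->
  forall M : nat, exists s : list R, length s = M /\ NoDup s /\
    Forall (fun t => hit_time V x t /\ 0 < Rabs (t - a) < 1) s.
Proof.
  intros Hacc M. induction M as [|M IH].
  - exists nil. repeat split; constructor.
  - destruct IH as [s [Hl [Hnd Hf]]].
    destruct (list_min_pos (fun t => Rabs (t - a)) s) as [g [Hg Hgf]].
    { eapply Forall_impl; [|exact Hf]. intros t [_ Ht]. simpl. lra. }
    destruct (Hacc (Rmin g 1) (Rmin_pos _ _ Hg Rlt_0_1)) as [t [Ht Hta]].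
    assert (Rmin g 1 <= g) by apply Rmin_l. assert (Rmin g 1 <= 1) by apply Rmin_r.
    exists (t :: s). split; [simpl; congruence|]. split.
    + constructor; auto. intro Hin. rewrite Forall_forall in Hgf.
      specialize (Hgf t Hin). simpl in Hgf. lra.
    + constructor; auto. split; auto. lra.
Qed.

Lemma complex_level_cases V x : complex_level V x ->
  (exists t l, 0 < t /\ is_left_lim V t l /\ V t - l <> 0 /\ (x = V t \/ x = l)) \/
  (exists n : nat, many_hits V (INR (S n)) x).
Proof.
  intros Hx.
  destruct (pselect (exists t l, 0 < t /\ is_left_lim V t l /\ V t - l <> 0 /\
    (x = V t \/ x = l))) as [J|J]; [left; exact J|right].
  assert (Hacc : exists a, 0 <= a /\ forall delta, 0 < delta ->
    exists t, hit_time V x t /\ 0 < Rabs (t - a) < delta).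
  { apply: contrapT; intro K. apply Hx. split; [|exact J].
    intros a Ha. apply: contrapT; intro K2. apply K. exists a. split; auto.
    intros delta Hd. apply: contrapT; intro K3. apply K2. exists delta. split; auto.
    intros t Ht Hc. apply K3. exists t. auto. }
  destruct Hacc as [a [Ha Hacc]]. destruct (arch_nat a) as [n Hn]. exists n. intros M.
  destruct (accumulating_hit_lists V x a Hacc M) as [s [Hl [Hnd Hf]]].
  exists s. split; [exact Hl|]. split; [exact Hnd|].
  eapply Forall_impl; [|exact Hf]. intros t [Ht Hta]. split; [exact Ht|].
  rewrite S_INR. revert Hta. unfold Rabs; destruct Rcase_abs; lra.
Qed.

(** * Variation along partitions *)

Lemma ascending_app (p q : list R) : ascending p -> ascending q ->
  (forall x y, In x p -> In y q -> x <= y) -> ascending (p ++ q).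
Proof.
  induction p as [|a p IH]; intros Hp Hq Hpq; simpl; auto.
  destruct p as [|b p'].
  - simpl. destruct q as [|c q']; auto. split; auto. apply Hpq; simpl; auto.
  - destruct Hp as [Hab Hp]. split; auto. apply IH; auto.
    intros x y Hx Hy. apply Hpq; simpl in *; auto.
Qed.

Lemma variation_app V (p q : list R) :
  variation_along V p + variation_along V q <= variation_along V (p ++ q).
Proof.
  induction p as [|a p IH]; simpl; [lra|].
  destruct p as [|b p'].
  - simpl. destruct q as [|c q']; simpl; [lra|].
    pose proof (Rabs_pos (V c - V a)). lra.
  - simpl in *. lra.
Qed.

Definition variation_le (V : R -> R) (T C : R) : Prop :=
  forall p, ascending p -> Forall (fun t => 0 <= t <= T) p -> variation_along V p <= C.

Lemma increment_le_variation V (T C : R) : variation_le V T C ->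
  forall u v, 0 <= u <= T -> 0 <= v <= T -> Rabs (V u - V v) <= C.
Proof.
  intros HC u v Hu Hv. destruct (Rle_dec u v) as [H|H].
  - specialize (HC (u :: v :: nil)). simpl in HC. rewrite Rabs_minus_sym.
    assert (Rabs (V v - V u) + 0 <= C)
      by (apply HC; [split; auto | constructor; [lra|constructor; [lra|constructor]]]).
    lra.
  - specialize (HC (v :: u :: nil)). simpl in HC.
    assert (Rabs (V u - V v) + 0 <= C)
      by (apply HC; [split; [lra|auto] | constructor; [lra|constructor; [lra|constructor]]]).
    lra.
Qed.

Fixpoint sumR (D : nat -> R) (K : nat) : R :=
  match K with O => 0 | S K => sumR D K + D K end.

Definition cell_increments (V : R -> R) (h : R) (D : nat -> R) (K : nat) : Prop :=
  forall j eps, (j < K)%nat -> 0 < eps -> exists u v,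
    INR j * h <= u <= INR (S j) * h /\ INR j * h <= v <= INR (S j) * h /\
    D j - eps <= Rabs (V u - V v).

(* Concatenating the near-optimal increments of the first K' cells yields a
   partition of [0, K' h] whose variation almost reaches the sum of the D j. *)
Lemma cell_increments_partition V h D K : 0 < h -> cell_increments V h D K ->
  forall K', (K' <= K)%nat -> forall eps, 0 < eps -> exists p, ascending p /\
    Forall (fun t => 0 <= t <= INR K' * h) p /\ sumR D K' - eps <= variation_along V p.
Proof.
  intros Hh HD K'. induction K' as [|K' IH]; intros HK eps He.
  - exists nil. simpl. repeat split; [constructor|lra].
  - destruct (IH ltac:(lia) (eps / 2)) as [p [Ha [Hf Hv]]]; [lra|].
    destruct (HD K' (eps / 2) ltac:(lia)) as [u [v [Hu [Hv' Huv]]]]; [lra|].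
    assert (HK0 : 0 <= INR K') by apply pos_INR.
    assert (HS : INR (S K') = INR K' + 1) by apply S_INR.
    set (q := Rmin u v :: Rmax u v :: nil).
    assert (Eq : variation_along V q = Rabs (V u - V v)).
    { unfold q, Rmin, Rmax. simpl. destruct Rle_dec; rewrite Rplus_0_r; auto.
      apply Rabs_minus_sym. }
    exists (p ++ q). split; [|split].
    + apply ascending_app; auto.
      * simpl. split; auto. unfold Rmin, Rmax; destruct Rle_dec; lra.
      * intros x y Hx Hy. rewrite Forall_forall in Hf. specialize (Hf x Hx).
        simpl in Hy. destruct Hy as [<-|[<-|[]]]; unfold Rmin, Rmax; destruct Rle_dec;
        rewrite HS in Hu Hv' Hf; nra.
    + apply Forall_app. split.
      * eapply Forall_impl; [|exact Hf]. intros t Ht. rewrite HS. nra.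
      * rewrite HS in Hu Hv' |- *. unfold q.
        constructor; [|constructor; [|constructor]]; unfold Rmin, Rmax; destruct Rle_dec; nra.
    + pose proof (variation_app V p q). simpl sumR. lra.
Qed.

Lemma cell_increments_le_variation V h C D K : 0 < h ->
  variation_le V (INR K * h) C -> cell_increments V h D K -> sumR D K <= C.
Proof.
  intros Hh HC HD. destruct (Rle_dec (sumR D K) C) as [|Hn]; auto. exfalso.
  destruct (cell_increments_partition V h D K Hh HD K (leqnn K)
    ((sumR D K - C) / 2)) as [p [Ha [Hf Hv]]]; [lra|].
  specialize (HC p Ha Hf). lra.
Qed.

Lemma count_double (P Q : pred nat) L :
  (forall j, (j < L)%nat -> P j -> Q (2 * j)%nat || Q (2 * j + 1)%nat) ->
  (count P (iota 0 L) <= count Q (iota 0 (2 * L)))%nat.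
Proof.
  elim: L => [|L IH] H; first by [].
  have -> : (2 * L.+1 = 2 * L + 2)%N by lia.
  rewrite -(addn1 L) [iota 0 (2 * L + 2)]iotaD [iota 0 (L + 1)]iotaD !count_cat !add0n.
  apply: leq_add; first by apply: IH => j Hj; apply: H; lia.
  rewrite /= addn0. case HP: (P L); last by [].
  have := H L (ltnSn L) HP. rewrite addn1.
  by case: (Q (2 * L)%N) => //=; case: (Q (2 * L).+1).
Qed.

Lemma length_le_count (P : pred nat) K (s : list R) (Rel : R -> nat -> Prop) :
  NoDup s -> (forall t, In t s -> exists j, (j < K)%nat /\ P j /\ Rel t j) ->
  (forall t t' j, In t s -> In t' s -> Rel t j -> Rel t' j -> t = t') ->
  (length s <= count P (iota 0 K))%nat.
Proof.
  elim: s P => [|a s IH] P Hnd Hex Huniq /=; first by [].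
  inversion Hnd as [|a' s' Hnot Hnd']; subst.
  destruct (Hex a (or_introl erefl)) as [j0 [Hj0 [HP0 HR0]]].
  have Split : forall l, count P l =
    (count (fun j => P j && (j != j0)) l + count (fun j => P j && (j == j0)) l)%nat.
  { elim => [|y l IHl] //=. rewrite IHl. case: (P y) => /=; case: (y == j0) => /=; lia. }
  have Once : count (fun j => P j && (j == j0)) (iota 0 K) = 1%nat.
  { rewrite (eq_count (a2 := pred1 j0)); last first.
      move=> j /=. case E: (j == j0); last by rewrite andbF.
      by move/eqP: E => ->; rewrite HP0.
    by rewrite count_uniq_mem ?iota_uniq // mem_iota Hj0. }
  rewrite Split Once addn1 ltnS.
  apply: IH => //.
  - move=> t Ht. destruct (Hex t (or_intror Ht)) as [j [Hj [HPj HRj]]].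
    exists j. split; auto. split; auto. rewrite HPj /=. apply/eqP => Ej. subst j.
    have Eat := Huniq a t j0 (or_introl erefl) (or_intror Ht) HR0 HRj. subst. auto.
  - move=> t t' j Ht Ht' R1 R2. exact: (Huniq t t' j (or_intror Ht) (or_intror Ht') R1 R2).
Qed.

(** * The dyadic grid and the crossing counts *)

Section DyadicGrid.
Variables (V : R -> R) (n : nat).

Definition mesh (k : nat) : R := / 2 ^ k.
Definition ncells (k : nat) : nat := Nat.mul (S n) (Nat.pow 2 k).
Definition cell (k j : nat) : set R := fun u => INR j * mesh k <= u <= INR (S j) * mesh k.
Definition cell_values (k j : nat) : set R := fun y => exists u, cell k j u /\ V u = y.
Definition cell_lo (k j : nat) : R := inf (cell_values k j).
Definition cell_hi (k j : nat) : R := sup (cell_values k j).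
Definition cell_range (k j : nat) : set R :=
  [set` Interval (BLeft (cell_lo k j)) (BRight (cell_hi k j))].

Definition crossings (k : nat) (x : R) : nat :=
  count (fun j => x \in cell_range k j) (iota 0 (ncells k)).

Lemma mesh_pos k : 0 < mesh k.
Proof. unfold mesh. apply Rinv_0_lt_compat, pow_lt. lra. Qed.

Lemma ncells_mesh k : INR (ncells k) * mesh k = INR (S n).
Proof.
  unfold ncells, mesh. rewrite mult_INR pow_INR.
  replace (INR 2) with 2 by (simpl; lra).
  rewrite Rmult_assoc Rinv_r; [lra|]. apply pow_nonzero. lra.
Qed.

Lemma cell_in_domain k j : (j < ncells k)%nat -> forall u, cell k j u -> 0 <= u <= INR (S n).
Proof.
  intros Hj u [H1 H2]. pose proof (mesh_pos k). pose proof (pos_INR j).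
  assert (INR (S j) <= INR (ncells k)) by (apply le_INR; lia).
  rewrite <- (ncells_mesh k). split; nra.
Qed.

Lemma cell_values_left k j : cell_values k j (V (INR j * mesh k)).
Proof.
  exists (INR j * mesh k). split; auto. unfold cell. rewrite S_INR.
  pose proof (mesh_pos k). split; nra.
Qed.

Lemma cell_hi_le k j c : (forall y, cell_values k j y -> y <= c) -> cell_hi k j <= c.
Proof.
  intros H. apply/RleP. apply: ge_sup.
  - exists (V (INR j * mesh k)). apply cell_values_left.
  - move=> y Hy. apply/RleP. exact: H.
Qed.

Lemma cell_lo_ge k j c : (forall y, cell_values k j y -> c <= y) -> c <= cell_lo k j.
Proof.
  intros H. apply/RleP. apply: lb_le_inf.
  - exists (V (INR j * mesh k)). apply cell_values_left.
  - move=> y Hy. apply/RleP. exact: H.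
Qed.

Lemma cell_range_iff k j x : cell_range k j x <-> cell_lo k j <= x <= cell_hi k j.
Proof.
  rewrite /cell_range /= in_itv /=. split.
  - by move/andP => [/RleP A /RleP B].
  - by move=> [A B]; apply/andP; split; apply/RleP.
Qed.

Lemma mesh_S k : mesh (S k) = mesh k / 2.
Proof. unfold mesh. simpl. rewrite Rinv_mult. lra. Qed.

Lemma ncells_S k : ncells (S k) = (2 * ncells k)%coq_nat.
Proof. unfold ncells. simpl Nat.pow. lia. Qed.

Lemma INR_double j : INR (2 * j) = 2 * INR j.
Proof. rewrite mulnE mult_INR. simpl. lra. Qed.

Lemma INR_double_S j : INR (2 * j + 1) = 2 * INR j + 1.
Proof. rewrite addnE plus_INR INR_double. simpl. lra. Qed.

Lemma cell_split k j u : cell k j u -> cell (S k) (2 * j) u \/ cell (S k) (2 * j + 1) u.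
Proof.
  unfold cell. rewrite mesh_S !S_INR INR_double INR_double_S.
  pose proof (mesh_pos k). intros [A B].
  destruct (Rle_dec u ((INR j + / 2) * mesh k)); [left|right]; split; nra.
Qed.

Lemma cell_midpoint k j : let m := INR (S (2 * j)) * mesh (S k) in
  cell (S k) (2 * j) m /\ cell (S k) (2 * j + 1) m.
Proof.
  unfold cell. rewrite mesh_S !S_INR INR_double INR_double_S.
  pose proof (mesh_pos k). split; split; nra.
Qed.


Section Bounded.
Variable C : R.
Hypothesis var_bound : variation_le V (INR (S n)) C.

(* A variation bound on [0, n+1] makes V bounded there, so the cell ranges
   are well-defined bounded intervals. *)
Let increment_bound := increment_le_variation V (INR (S n)) C var_bound.

Lemma cell_values_bounded k j : (j < ncells k)%nat ->
  forall y, cell_values k j y -> V 0 - C <= y <= V 0 + C.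
Proof.
  intros Hj y [u [Hu <-]]. have Hu' := cell_in_domain k j Hj u Hu.
  assert (H0 : 0 <= 0 <= INR (S n)) by (pose proof (pos_INR (S n)); lra).
  have := increment_bound u 0 Hu' H0. unfold Rabs; destruct Rcase_abs; lra.
Qed.

Lemma cell_values_sup_inf k j : (j < ncells k)%nat ->
  has_sup (cell_values k j) /\ has_inf (cell_values k j).
Proof.
  intros Hj. have B := cell_values_bounded k j Hj.
  split; split; try (exists (V (INR j * mesh k)); apply cell_values_left).
  - exists (V 0 + C). intros y Hy. apply/RleP. apply (B y Hy).
  - exists (V 0 - C). intros y Hy. apply/RleP. apply (B y Hy).
Qed.

Lemma cell_hi_ub k j y : (j < ncells k)%nat -> cell_values k j y -> y <= cell_hi k j.
Proof.
  intros Hj Hy. destruct (cell_values_sup_inf k j Hj) as [Hsu _].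
  apply/RleP. exact: (sup_upper_bound Hsu).
Qed.

Lemma cell_lo_lb k j y : (j < ncells k)%nat -> cell_values k j y -> cell_lo k j <= y.
Proof.
  intros Hj Hy. destruct (cell_values_sup_inf k j Hj) as [_ Hin].
  apply/RleP. exact: (ge_inf Hin.2).
Qed.

Lemma cell_lo_le_hi k j : (j < ncells k)%nat -> cell_lo k j <= cell_hi k j.
Proof.
  intros Hj. apply Rle_trans with (V (INR j * mesh k)).
  - apply (cell_lo_lb k j _ Hj), cell_values_left.
  - apply (cell_hi_ub k j _ Hj), cell_values_left.
Qed.

Lemma cell_range_mem k j x : (j < ncells k)%nat ->
  forall u v, cell k j u -> cell k j v -> V u <= x <= V v -> cell_range k j x.
Proof.
  intros Hj u v Hu Hv [H1 H2]. apply cell_range_iff. split.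
  - apply Rle_trans with (V u); [|exact H1]. apply (cell_lo_lb k j _ Hj). by exists u.
  - apply Rle_trans with (V v); [exact H2|]. apply (cell_hi_ub k j _ Hj). by exists v.
Qed.

Lemma cell_oscillation_attained k j eps : (j < ncells k)%nat -> 0 < eps ->
  exists u v, cell k j u /\ cell k j v /\
    cell_hi k j - cell_lo k j - eps <= Rabs (V u - V v).
Proof.
  intros Hj He. destruct (cell_values_sup_inf k j Hj) as [Hsu Hin].
  set e2 := eps / 2.
  have H2 : 0 < e2 by unfold e2; lra.
  have He2 : (0 < e2)%R by apply/RltP.
  destruct (sup_adherent He2 Hsu) as [y [u [Hu <-]] Hy].
  destruct (inf_adherent He2 Hin) as [y' [v [Hv <-]] Hy'].
  move/RltP: Hy => Hy. move/RltP: Hy' => Hy'.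
  rewrite -RminusE in Hy. rewrite -RplusE in Hy'.
  exists u, v. split; auto. split; auto. rewrite /cell_hi /cell_lo. unfold e2 in *.
  apply Rle_trans with (V u - V v); [lra|apply Rle_abs].
Qed.

Lemma child_cells_valid k j : (j < ncells k)%nat ->
  (2 * j < ncells (S k))%nat /\ (2 * j + 1 < ncells (S k))%nat.
Proof. intros Hj. rewrite ncells_S. split; lia. Qed.

(* The range of a cell is covered by the ranges of its two halves ... *)
Lemma cell_hi_split k j : (j < ncells k)%nat ->
  cell_hi k j <= Rmax (cell_hi (S k) (2 * j)) (cell_hi (S k) (2 * j + 1)).
Proof.
  intros Hj. destruct (child_cells_valid k j Hj) as [Hj1 Hj2].
  apply cell_hi_le. intros y [u [Hu <-]]. destruct (cell_split _ _ _ Hu) as [Hu'|Hu'].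
  - apply Rle_trans with (cell_hi (S k) (2 * j)); [|apply Rmax_l].
    apply (cell_hi_ub _ _ _ Hj1). by exists u.
  - apply Rle_trans with (cell_hi (S k) (2 * j + 1)); [|apply Rmax_r].
    apply (cell_hi_ub _ _ _ Hj2). by exists u.
Qed.

Lemma cell_lo_split k j : (j < ncells k)%nat ->
  Rmin (cell_lo (S k) (2 * j)) (cell_lo (S k) (2 * j + 1)) <= cell_lo k j.
Proof.
  intros Hj. destruct (child_cells_valid k j Hj) as [Hj1 Hj2].
  apply cell_lo_ge. intros y [u [Hu <-]]. destruct (cell_split _ _ _ Hu) as [Hu'|Hu'].
  - apply Rle_trans with (cell_lo (S k) (2 * j)); [apply Rmin_l|].
    apply (cell_lo_lb _ _ _ Hj1). by exists u.
  - apply Rle_trans with (cell_lo (S k) (2 * j + 1)); [apply Rmin_r|].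
    apply (cell_lo_lb _ _ _ Hj2). by exists u.
Qed.

(* ... and these two ranges overlap (both contain V at the midpoint), so a
   level in the range of a cell lies in the range of one of its halves. *)
Lemma cell_range_split k j x : (j < ncells k)%nat -> cell_range k j x ->
  cell_range (S k) (2 * j) x \/ cell_range (S k) (2 * j + 1) x.
Proof.
  intros Hj Hx. destruct (child_cells_valid k j Hj) as [Hj1 Hj2].
  rewrite !cell_range_iff in Hx |- *.
  destruct (cell_midpoint k j) as [M1 M2].
  set m := INR (S (2 * j)) * mesh (S k) in M1 M2.
  have S1 : cell_values (S k) (2 * j) (V m) by exists m.
  have S2 : cell_values (S k) (2 * j + 1) (V m) by exists m.
  have L1 := cell_lo_lb _ _ _ Hj1 S1. have L2 := cell_lo_lb _ _ _ Hj2 S2.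
  have U1 := cell_hi_ub _ _ _ Hj1 S1. have U2 := cell_hi_ub _ _ _ Hj2 S2.
  have Hmax := cell_hi_split k j Hj. have Hmin := cell_lo_split k j Hj.
  destruct Hx as [X1 X2].
  destruct (Rle_dec x (cell_hi (S k) (2 * j))) as [A1|A1];
  destruct (Rle_dec x (cell_hi (S k) (2 * j + 1))) as [A2|A2];
  destruct (Rle_dec (cell_lo (S k) (2 * j)) x) as [B1|B1];
  destruct (Rle_dec (cell_lo (S k) (2 * j + 1)) x) as [B2|B2];
  try (left; lra); try (right; lra); exfalso;
  unfold Rmax, Rmin in *; repeat destruct Rle_dec; lra.
Qed.

Lemma crossings_step k x : (crossings k x <= crossings (S k) x)%nat.
Proof.
  rewrite /crossings ncells_S -mulnE. apply: count_double => j Hj Hx.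
  by case: (cell_range_split k j x Hj (set_mem Hx)) => A; apply/orP; [left|right];
    apply: mem_set.
Qed.

Lemma crossings_mono k k' x : (k <= k')%nat -> (crossings k x <= crossings k' x)%nat.
Proof. exact: (homo_leq (f := crossings^~ x) leqnn leq_trans (crossings_step^~ x)). Qed.

(* Hit times of x in (0, n+1] that are pairwise farther apart than the mesh
   lie in distinct cells, each of whose range contains x. *)
Lemma crossings_ge_hits k x (s : list R) : NoDup s ->
  Forall (fun t => hit_time V x t /\ t <= INR (S n)) s ->
  (forall t t', In t s -> In t' s -> t <> t' -> mesh k <= Rabs (t - t')) ->
  (length s <= crossings k x)%nat.
Proof.
  intros Hnd Hf Hgap. rewrite /crossings.
  apply: (length_le_count _ _ _ (fun t j => INR j * mesh k < t <= INR (S j) * mesh k)) => //.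
  - move=> t Ht. rewrite Forall_forall in Hf. destruct (Hf t Ht) as [Hh Htn].
    have Ht0 : 0 < t by destruct Hh.
    destruct (grid_index (mesh k) t (ncells k) (mesh_pos k) Ht0) as [j [Hj [A B]]].
    { rewrite ncells_mesh. exact Htn. }
    exists j. split; [exact Hj|]. split; [|split; auto].
    apply: mem_set.
    have Ha : 0 <= INR j * mesh k < t.
    { pose proof (pos_INR j). pose proof (mesh_pos k). split; [nra|lra]. }
    destruct (hit_time_bracket V x t _ _ Hh Ha B) as [u [v [Hu [Hv Hx]]]].
    exact: (cell_range_mem k j x Hj u v Hu Hv Hx).
  - move=> t t' j Ht Ht' [A1 B1] [A2 B2].
    destruct (Req_dec t t') as [|Hne]; auto. exfalso.
    have G := Hgap t t' Ht Ht' Hne. rewrite S_INR in B1 B2.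
    revert G. unfold Rabs; destruct Rcase_abs; intros; lra.
Qed.

Lemma many_hits_crossings x : many_hits V (INR (S n)) x ->
  forall M, exists k, (M <= crossings k x)%nat.
Proof.
  intros Hi M. destruct (Hi M) as [s [Hl [Hnd Hf]]].
  destruct (list_gap s Hnd) as [g [Hg Hgap]].
  destruct (small_mesh g Hg) as [k Hk]. exists k.
  rewrite -Hl. apply: (crossings_ge_hits k x s Hnd Hf).
  move=> t t' Ht Ht' Hne. unfold mesh. apply Rle_trans with g; [lra|]. auto.
Qed.

Lemma oscillation_sum_le k : sumR (fun j => cell_hi k j - cell_lo k j) (ncells k) <= C.
Proof.
  apply (cell_increments_le_variation V (mesh k) C _ (ncells k) (mesh_pos k)).
  - rewrite ncells_mesh. exact var_bound.
  - intros j eps Hj He. exact: (cell_oscillation_attained k j eps Hj He).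
Qed.

End Bounded.
End DyadicGrid.

(** * Measure of the set of levels with unbounded crossing counts *)

Local Open Scope ring_scope.
Local Open Scope ereal_scope.

Definition RT : realType := R.

Lemma sumR_big (D : nat -> R) K : (\sum_(j <- iota 0 K) D j)%R = sumR D K.
Proof.
  elim: K => [|K IH]; first by rewrite big_nil.
  rewrite -addn1 iotaD big_cat big_seq1 /=. by rewrite IH add0n addn1.
Qed.

Section CrossingMeasure.
Variables (V : R -> R) (n : nat) (C : R).
Hypothesis var_bound : variation_le V (INR (S n)) C.

Definition crossings_ext (k : nat) (x : RT) : \bar RT :=
  \sum_(j <- iota 0 (ncells n k)) (\1_(cell_range V k j) x)%:E.

Lemma crossings_extE k x : crossings_ext k x = ((crossings V n k x)%:R)%:E.
Proof.
  rewrite /crossings_ext /crossings sumEFin. congr (_%:E).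
  elim: (iota 0 (ncells n k)) => [|j l IH]; first by rewrite big_nil.
  rewrite big_cons /= IH indicE natrD. by case: (x \in cell_range V k j).
Qed.

Lemma cell_range_measurable k j : measurable (cell_range V k j : set RT).
Proof. exact: measurable_itv. Qed.

Lemma crossings_ext_measurable k : measurable_fun setT (crossings_ext k).
Proof.
  apply: emeasurable_sum => j. apply/measurable_EFinP.
  exact: measurable_indic (cell_range_measurable k j).
Qed.

Lemma cell_range_measure k j : (j < ncells n k)%nat ->
  lebesgue_measure (cell_range V k j : set RT) = ((cell_hi V k j - cell_lo V k j)%R)%:E.
Proof.
  move=> Hj. have Hle := cell_lo_le_hi V n C var_bound k j Hj.
  rewrite /cell_range lebesgue_measure_itv /=.
  case: ifPn => [//|]. rewrite lte_fin -leNgt => H.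
  have E : cell_hi V k j = cell_lo V k j by apply/eqP; rewrite eq_le H; apply/RleP.
  by rewrite E subrr.
Qed.

Lemma integral_crossings k :
  \int[lebesgue_measure]_(x in [set: RT]) crossings_ext k x =
  (sumR (fun j => cell_hi V k j - cell_lo V k j) (ncells n k))%:E.
Proof.
  rewrite /crossings_ext ge0_integral_sum //; last first.
    move=> j. apply/measurable_EFinP. exact: measurable_indic (cell_range_measurable k j).
  rewrite -sumR_big -sumEFin. apply: eq_big_seq => j.
  rewrite mem_iota add0n => /andP [_ Hj].
  rewrite integral_indic //; last exact: cell_range_measurable.
  rewrite setIT. exact: cell_range_measure.
Qed.

Definition level_set (k M : nat) : set RT := [set x | (M <= crossings V n k x)%N].

Lemma level_set_measurable k M : measurable (level_set k M).
Proof.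
  have -> : level_set k M = [set: RT] `&` [set x | (M%:R)%:E <= crossings_ext k x].
  { apply/seteqP; split => x /=.
    - move=> H; split => //. by rewrite crossings_extE lee_fin ler_nat.
    - by move=> [_]; rewrite crossings_extE lee_fin ler_nat. }
  apply: emeasurable_fun_c_infty => //. exact: crossings_ext_measurable.
Qed.

(* Markov's inequality for N_k: M * |{N_k >= M}| <= ∫ N_k <= C. *)
Lemma level_set_markov k M : (0 < M)%N ->
  (M%:R)%:E * lebesgue_measure (level_set k M) <= C%:E.
Proof.
  move=> HM. have Mpos : (0 < M%:R :> RT)%R by rewrite ltr0n.
  have := @le_integral_comp_abse _ _ _ lebesgue_measure _ measurableT
    _ _ id (@measurable_id _ _ setT) (fun r r0 => r0) (fun x y _ _ => id)
    (crossings_ext_measurable k) Mpos.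
  have Habs x : `|crossings_ext k x| = crossings_ext k x.
  { by rewrite crossings_extE gee0_abs // lee_fin ler0n. }
  under eq_integral do rewrite Habs.
  rewrite integral_crossings.
  have -> : [set: RT] `&` [set x | (M%:R)%:E <= `|crossings_ext k x|] = level_set k M.
  { apply/seteqP; split => x /=.
    - by move=> [_]; rewrite Habs crossings_extE lee_fin ler_nat.
    - by move=> H; split => //; rewrite Habs crossings_extE lee_fin ler_nat. }
  move=> /le_trans; apply. rewrite lee_fin. apply/RleP. exact: oscillation_sum_le.
Qed.


Lemma level_set_bound k M : (0 < M)%N ->
  lebesgue_measure (level_set k M) <= (C / M%:R)%:E.
Proof.
  move=> HM. have := level_set_markov k M HM.
  have Mp : (0 < M%:R :> R)%R by rewrite ltr0n.
  have Hge : 0 <= lebesgue_measure (level_set k M) by exact: measure_ge0.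
  case: (lebesgue_measure (level_set k M)) Hge => [r| |] //= Hr.
  - rewrite -EFinM !lee_fin => H. by rewrite ler_pdivlMr // mulrC.
  - by rewrite mulry gtr0_sg // mul1e leye_eq.
Qed.

(* The levels crossed at least M times at some resolution; since N_k is
   nondecreasing in k this is an increasing union, of measure <= C/M. *)
Definition crossed_often (M : nat) : set RT := \bigcup_k level_set k M.

Lemma crossed_often_bound M : (0 < M)%N ->
  lebesgue_measure (crossed_often M) <= (C / M%:R)%:E.
Proof.
  move=> HM.
  have mE k : measurable (level_set k M) := level_set_measurable k M.
  have mG : measurable (crossed_often M) by apply: bigcupT_measurable.
  have nd : nondecreasing_seq (level_set ^~ M).
  { move=> k k' Hk. apply/subsetPset => x /= H. apply: leq_trans H _.
    exact: (crossings_mono V n C var_bound k k' x Hk). }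
  have H := @nondecreasing_cvg_mu _ _ _ lebesgue_measure _ mE mG nd.
  rewrite -(cvg_lim (@ereal_hausdorff _) H).
  apply: lime_le; first by apply/cvg_ex; eexists; exact: H.
  apply: nearW => k. exact: level_set_bound.
Qed.

Definition unbounded_crossings : set RT := \bigcap_M crossed_often M.+1.

Lemma unbounded_crossings_measurable : measurable unbounded_crossings.
Proof.
  apply: bigcapT_measurable => M. apply: bigcupT_measurable => k.
  exact: level_set_measurable.
Qed.

Lemma unbounded_crossings_null : lebesgue_measure unbounded_crossings = 0.
Proof.
  apply/eqP; rewrite eq_le measure_ge0 andbT.
  apply/lee_addgt0Pr => e He. rewrite add0e.
  have He' : Rlt 0 e by move/RltP: He.
  destruct (small_div C e He') as [M HM].
  apply: (@le_trans _ _ (lebesgue_measure (crossed_often M.+1))).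
  - apply: le_measure; rewrite ?inE //.
    + exact: unbounded_crossings_measurable.
    + apply: bigcupT_measurable => k. exact: level_set_measurable.
    + by move=> x Hx; apply: Hx.
  - apply: (le_trans (crossed_often_bound M.+1 (ltn0Sn M))).
    rewrite lee_fin -INRE -RdivE. by apply/RleP.
Qed.

Lemma many_hits_unbounded x : many_hits V (INR (S n)) x -> unbounded_crossings x.
Proof.
  move=> Hi M _. destruct (many_hits_crossings V n C var_bound x Hi M.+1) as [k Hk].
  by exists k.
Qed.

End CrossingMeasure.

(** * Jump values are countably many *)

Lemma ball_Rabs (x y d : RT) : ball x d y <-> Rlt (Rabs (x - y)) d.
Proof.
  rewrite -ball_normE /ball_ /=. split; [move/RltP; done| move=> H; by apply/RltP].
Qed.

Lemma big_jumps_isolated V (hV : cadlag V) m :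
  [set t : RT | big_jump V m t] `<=` isolated [set t : RT | big_jump V m t].
Proof.
  move=> t Ht. split; first by apply: mem_set.
  destruct (big_jump_isolated V hV m t Ht) as [d [Hd Hiso]].
  exists (ball t d).
  - apply: nbhsx_ballx. by apply/RltP.
  - apply/seteqP; split => s /=.
    + move=> [Hb Hs]. apply: (Hiso s Hs). move/ball_Rabs: Hb. by rewrite Rabs_minus_sym.
    + move=> ->. split => //. apply/ball_Rabs. rewrite Rminus_diag Rabs_R0. exact Hd.
Qed.

Definition jump_times (V : R -> R) : set RT := \bigcup_m [set t : RT | big_jump V m t].

(* Each family of big jumps is isolated, hence countable. *)
Lemma jump_times_countable V (hV : cadlag V) : countable (jump_times V).
Proof.
  apply: bigcup_countable; first exact: countableP.
  move=> m _. apply: sub_countable (countable_isolated [set t : RT | big_jump V m t]).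
  apply: subset_card_le. exact: big_jumps_isolated.
Qed.

(* A chosen left limit of V at t (the left limit, when it exists). *)
Definition left_limit (V : R -> R) (t : RT) : RT := xget 0%R (is_left_lim V t).

Lemma countable_negligible (A : set RT) : countable A -> lebesgue_measure.-negligible A.
Proof.
  move=> HA. exists A; split => //.
  - exact: countable_measurable.
  - exact: countable_lebesgue_measure0.
Qed.

Definition jump_values (V : R -> R) : set RT :=
  (V @` jump_times V) `|` (left_limit V @` jump_times V).

Lemma jump_values_negligible V (hV : cadlag V) : lebesgue_measure.-negligible (jump_values V).
Proof.
  apply: negligibleU; apply: countable_negligible;
  apply: sub_countable (jump_times_countable V hV); exact: card_image_le.
Qed.

(** * From negligible sets to interval covers *)

Lemma sum_f_R0_big (f : nat -> R) N : sum_f_R0 f N = (\sum_(0 <= k < N.+1) f k)%R.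
Proof.
  elim: N => [|N IH]; first by rewrite big_nat1.
  by rewrite big_nat_recr //= -IH.
Qed.

(* A Lebesgue-negligible set is covered by countably many intervals of
   arbitrarily small total length (outer measure via open interval covers). *)
Lemma negligible_lebesgue_null (A : set RT) :
  lebesgue_measure.-negligible A -> lebesgue_null A.
Proof.
  move/negligible_outer_measure => H0 eps Heps.
  rewrite outer_measure_open_itv_cover in H0.
  have Heps' : (0 < eps)%R by apply/RltP.
  have fin : ereal_inf [set \big[+%E/0%R]_(0 <= k <oo) wlength idfun (F k)
            | F in open_itv_cover A] \is a fin_num by rewrite H0.
  have [x [F [Fitv AF] <-] Hx] := lb_ereal_inf_adherent Heps' fin.
  rewrite H0 add0e in Hx.
  pose ab k := projT1 (cid (Fitv k)).
  have Fk k : F k = `](ab k).1, (ab k).2[%classic := projT2 (cid (Fitv k)).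
  exists (fun k => (ab k).1), (fun k => Rmax (ab k).1 (ab k).2). split; [|split].
  - move=> k. apply Rmax_l.
  - move=> y Hy. case: (AF y Hy) => k _ Hk. exists k. rewrite Fk /= in_itv /= in Hk.
    move/andP: Hk => [/RltP H1 /RltP H2]. cbv beta. move: H1 H2.
    case: (ab k) => a b /= H1 H2. split; [lra|].
    apply Rle_trans with b; [lra|apply Rmax_r].
  - move=> N.
    have L k : wlength idfun (F k) = ((Rmax (ab k).1 (ab k).2 - (ab k).1)%R)%:E.
    { rewrite Fk wlength_itv /=. case: ifPn.
      - case: (ab k) => a b /=. rewrite lte_fin => /RltP H. rewrite Rmax_right; [by []|lra].
      - case: (ab k) => a b /=. rewrite lte_fin => /RltP H.
        rewrite Rmax_left; [|by apply Rnot_lt_le]. by rewrite subrr. }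
    apply/RleP. rewrite -lee_fin sum_f_R0_big -sumEFin. apply: le_trans (ltW Hx).
    rewrite (eq_eseriesr (fun k _ => L k)).
    apply: nneseries_lim_ge => k _ _. rewrite lee_fin. apply/RleP.
    case: (ab k) => a b /=. rewrite -R0E. have := Rmax_l a b. lra.
Qed.

Lemma complex_levels_covered V : (complex_level V : set RT) `<=`
  jump_values V `|` \bigcup_n (many_hits V (INR (S n)) : set RT).
Proof.
  move=> x /complex_level_cases [[t [l [Ht [Hl [Hne Hx]]]]]|[n Hn]]; last by right; exists n.
  left. destruct (jump_is_big V t l Ht Hl Hne) as [m Hm].
  have Jt : jump_times V t by exists m.
  case: Hx => ->; [left|right]; exists t => //.
  apply: (left_lim_unique V t) => //. apply: xgetPex. by exists l.
Qed.

Lemma many_hits_negligible V (hfv : finite_variation_loc V) n :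
  lebesgue_measure.-negligible (many_hits V (INR (S n)) : set RT).
Proof.
  destruct (hfv (INR (S n))) as [C HC]; first exact: pos_INR.
  exists (unbounded_crossings V n); split.
  - exact: unbounded_crossings_measurable.
  - exact: (unbounded_crossings_null V n C HC).
  - exact: (many_hits_unbounded V n C HC).
Qed.

Theorem lemma1 (V : R -> R) (hV : cadlag V) (hfv : finite_variation_loc V) :
  lebesgue_null (complex_level V).
Proof.
  apply: negligible_lebesgue_null.
  have [A [mA A0 HA]] : lebesgue_measure.-negligible
      (jump_values V `|` \bigcup_n (many_hits V (INR (S n)) : set RT)).
  { apply: negligibleU; first exact: jump_values_negligible.
    apply: negligible_bigcup => n. exact: many_hits_negligible. }
  exists A; split => //. exact: subset_trans (complex_levels_covered V) HA.
Qed.
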